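(* For $n\in\mathbb{N}$ let $X_n=(\sum_{i=1}^{2n}\oplus\ell_2)_{\ell_1}$ and $Y_n=(\sum_{i=1}^{2n}\oplus\ell_2)_{\ell_\infty}$, and let $\mathcal{X}=(\sum_{n}\oplus(X_n\oplus Y_n))_{\ell_2}$, i.e. the space of $x=\sum_n(x_n+y_n)$ with $x_n=(x_{n(1)},\ldots,x_{n(2n)})\in X_n$, $y_n=(y_{n(1)},\ldots,y_{n(2n)})\in Y_n$, normed by $\|x\|^2=\sum_n\big((\sum_{j=1}^{2n}\|x_{n(j)}\|)^2+(\max_{1\le j\le 2n}\|y_{n(j)}\|)^2\big)$. Then $\mathcal{X}$ fails the UALS property.
   Context: A Banach space $X$ satisfies the UALS property if there exists $C>0$ such that for every convex norm-compact $W\subset\mathcal{L}(X)$, every $A\in\mathcal{L}(X)$ and $\varepsilon>0$ such that for every $x$ in the unit ball of $X$ there is $B\in W$ with $\|A(x)-B(x)\|\le\varepsilon$, there exist a closed finite-codimensional subspace $Y$ of $X$ and $B\in W$ with $\|(A-B)|_Y\|_{\mathcal{L}(Y,X)}\le C\varepsilon$. *)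

From HB Require Import structures.
From mathcomp Require Import all_boot all_order all_algebra.
From mathcomp Require Import all_classical all_reals all_analysis.
From Stdlib Require List.
Set Implicit Arguments. Unset Strict Implicit. Unset Printing Implicit Defensive.
Import Order.TTheory GRing.Theory Num.Theory.
Local Open Scope classical_set_scope.
Local Open Scope ring_scope.

(* Generic notions for a normed space given as a linear subspace S of an     *)
(* ambient vector space V with norm nrm (only its values on S matter).       *)
Section Generic.
Variables (R : realType) (V : lmodType R) (S : set V) (nrm : V -> R).

(* L(S): bounded linear operators S -> S.  An operator is represented by a
   function V -> V, normalised to vanish outside S, so that elements of L(S)
   are in bijection with such functions. *)
Definition bounded_op (A : V -> V) : Prop :=
  [/\ (forall x, S x -> S (A x)),
      (forall (a : R) x y, S x -> S y -> A (a *: x + y) = a *: A x + A y),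
      (exists M : R, forall x, S x -> nrm (A x) <= M * nrm x) &
      (forall x, ~ S x -> A x = 0)].

Definition opdist (A B : V -> V) : R :=
  sup [set nrm (A x - B x) | x in [set x | S x /\ nrm x <= 1]].

Definition op_open (U : set (V -> V)) : Prop :=
  forall A, bounded_op A -> U A ->
    exists2 r : R, 0 < r & forall B, bounded_op B -> opdist A B < r -> U B.

Definition op_compact (W : set (V -> V)) : Prop :=
  W `<=` bounded_op /\
  forall (I : Type) (U : I -> set (V -> V)),
    (forall i, op_open (U i)) ->
    (forall A, W A -> exists i, U i A) ->
    exists F : seq I, forall A, W A -> exists2 i, List.In i F & U i A.

Definition op_convex (W : set (V -> V)) : Prop :=
  forall A B (t : R), W A -> W B -> 0 <= t <= 1 ->
    W (fun x => t *: A x + (1 - t) *: B x).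

Definition closed_fincodim_subspace (Y : set V) : Prop :=
  [/\ Y `<=` S, Y 0,
      (forall (a : R) x y, Y x -> Y y -> Y (a *: x + y)),
      (forall x, S x -> (forall e : R, 0 < e -> exists2 y, Y y & nrm (x - y) < e) -> Y x) &
      (exists (m : nat) (v : 'I_m -> V), (forall i, S (v i)) /\
         forall x, S x -> exists y (c : 'I_m -> R),
           Y y /\ x = y + \sum_(i < m) c i *: v i)].

Definition UALS : Prop :=
  exists C : R, 0 < C /\
    forall W : set (V -> V), op_convex W -> op_compact W ->
    forall A, bounded_op A ->
    forall eps : R, 0 < eps ->
      (forall x, S x -> nrm x <= 1 -> exists2 B, W B & nrm (A x - B x) <= eps) ->
      exists Y B, [/\ closed_fincodim_subspace Y, W B &
        forall y, Y y -> nrm y <= 1 -> nrm (A y - B y) <= C * eps].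

End Generic.

(* A vector is v : nat -> bool -> nat -> nat -> R, where v n false j is the   *)
(* l_2-component x_{n(j+1)} of x_n in X_n, v n true j is y_{n(j+1)} in Y_n,  *)
(* (j < 2n), and the last nat indexes the coordinates in l_2.               *)
Section Concrete.
Variable R : realType.

Definition Ecar := nat -> bool -> nat -> nat -> R^o.
HB.instance Definition _ := GRing.Lmodule.on Ecar.

Definition l2sq (u : nat -> R) : \bar R :=
  (\sum_(0 <= k <oo) ((u k) ^+ 2)%:E)%E.

Definition cnorm (v : Ecar) (n : nat) (b : bool) (j : nat) : R :=
  Num.sqrt (fine (l2sq (v n b j))).

Definition Xterm (v : Ecar) (n : nat) : R :=
  (\sum_(j < 2 * n) cnorm v n false j) ^+ 2 +
  (\big[Num.max/0]_(j < 2 * n) cnorm v n true j) ^+ 2.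

Definition Xspace : set Ecar :=
  [set v | [/\ (forall n b j k, (2 * n <= j)%N -> v n b j k = 0),
               (forall n b j, (l2sq (v n b j) < +oo)%E) &
               ((\sum_(0 <= n <oo) (Xterm v n)%:E) < +oo)%E]].

Definition Xnorm (v : Ecar) : R :=
  Num.sqrt (fine (\sum_(0 <= n <oo) (Xterm v n)%:E)%E).

End Concrete.

(* Fix n0 > 2C.  Let W be the set of operators that copy each slot x_{n0(j)}
   of X_{n0}, scaled by a weight p_j, into the slot y_{n0(j)} of Y_{n0}, where
   0 <= p_j <= 1 and sum_j p_j <= n0; W is convex and norm-compact, being a
   Lipschitz image of a compact polytope.  For the operator A with all weights
   1 and x in the unit ball, sum_j ||x_{n0(j)}|| <= 1, so fewer than n0 slots
   exceed 1/n0; keeping exactly those gives B in W with ||Ax - Bx|| <= 1/n0,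
   because Y_{n0} carries the sup norm.  But some p_j <= 1/2, as there are 2n0
   slots, and a finite-codimensional subspace contains a unit vector supported
   in the single infinite-dimensional slot x_{n0(j)}; there ||(A - B) y|| >= 1/2,
   which is more than C/n0. *)

From HB Require Import structures.
From mathcomp Require Import all_boot all_order all_algebra.
From mathcomp Require Import all_classical all_reals all_analysis.
From mathcomp Require Import ring lra.
Set Implicit Arguments. Unset Strict Implicit. Unset Printing Implicit Defensive.
Import Order.TTheory GRing.Theory Num.Theory.
Import numFieldNormedType.Exports.
Local Open Scope classical_set_scope.
Local Open Scope ring_scope.

Lemma In_of_mem (T : eqType) (x : T) (s : seq T) : x \in s -> List.In x s.
Proof. by elim: s => //= a s IH; rewrite inE => /orP[/eqP ->|/IH]; [left|right]. Qed.

Lemma sqr_lin_le (R : realDomainType) (b p q r : R) :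
  0 <= r -> r <= 2 * b * p + 2 * q -> r ^+ 2 <= 8 * b ^+ 2 * p ^+ 2 + 8 * q ^+ 2.
Proof.
move=> r0 rpq; apply: (@le_trans _ _ ((2 * b * p + 2 * q) ^+ 2)).
  by rewrite ler_sqr ?nnegrE // (le_trans r0).
rewrite -subr_ge0 (_ : _ - _ = (2 * b * p - 2 * q) ^+ 2) ?sqr_ge0 //; ring.
Qed.

Lemma bigmax_eq0 (R : realDomainType) n (F : 'I_n -> R) : (forall i, F i = 0) ->
  \big[Num.max/0]_(i < n) F i = 0.
Proof. by move=> F0; rewrite big1_idem // /= maxxx. Qed.

Section OperatorSpaces.
Variables (R : realType) (V : lmodType R) (S : set V) (nrm : V -> R).

Lemma op_compact_image (T : ptopologicalType) (K : set T) (f : T -> V -> V) :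
  compact K -> (forall p, bounded_op S nrm (f p)) ->
  (forall p (r : R), 0 < r -> \forall q \near p, opdist S nrm (f p) (f q) < r) ->
  op_compact S nrm (f @` K).
Proof.
move=> cK fS fcont; split; first by move=> _ [p _ <-].
move=> I U Uo cov.
pose O (i : {classic I}) : set T := f @^-1` U i.
have Oo i : open (O i).
  rewrite openE => p /= Ufp; have [r r0 Ur] := Uo i _ (fS p) Ufp.
  by apply: filterS (fcont p r r0) => q /(Ur _ (fS q)).
rewrite compact_cover in cK.
have [|D _ DK] := cK {classic I} setT O (fun i _ => Oo i).
  by move=> p Kp; have [i Ui] := cov _ (ex_intro2 _ _ p Kp erefl); exists i.
exists (finmap.enum_fset D) => _ [p Kp <-].
by have [i Di Oi] := DK p Kp; exists i => //; exact: (@In_of_mem {classic I}).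
Qed.

Lemma closed_fincodim_subspace_sum (Y : set V) (I : Type) (r : seq I)
    (c : I -> R) (y : I -> V) :
  closed_fincodim_subspace S nrm Y -> (forall i, Y (y i)) ->
  Y (\sum_(i <- r) c i *: y i).
Proof.
move=> [_ Y0 Ylin _ _] Yy; elim/big_ind: _ => //.
  by move=> a b Ya Yb; rewrite -[a]scale1r; exact: Ylin.
by move=> i _; rewrite -[_ *: _]addr0; exact: Ylin.
Qed.

(* The coefficients form a left-kernel vector of the (m+1) x m matrix of the
   components of the e k along the m complementary vectors. *)
Lemma closed_fincodim_subspace_meets_span (Y : set V) :
  closed_fincodim_subspace S nrm Y ->
  exists m, forall e : 'I_m.+1 -> V, (forall k, S (e k)) ->
    exists2 lam : 'rV[R]_m.+1, lam != 0 & Y (\sum_k lam ord0 k *: e k).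
Proof.
move=> Yc; have [YS _ _ _ [m [v [_ dec]]]] := Yc; exists m => e eS.
have ycE k : exists yc : V * ('I_m -> R),
    Y yc.1 /\ e k = yc.1 + \sum_i yc.2 i *: v i.
  by have [y [c [Yy ->]]] := dec _ (eS k); exists (y, c).
have [yc ycP] := boolp.choice ycE.
pose M : 'M[R]_(m.+1, m) := \matrix_(k, i) (yc k).2 i.
have /rowV0Pn[lam /sub_kermxP lamM lam0] : kermx M != 0.
  by rewrite kermx_eq0 /row_free neq_ltn ltnS rank_leq_col.
exists lam => //.
have -> : \sum_k lam ord0 k *: e k = \sum_k lam ord0 k *: (yc k).1.
  under eq_bigr => k _ do rewrite (ycP k).2 scalerDr scaler_sumr.
  rewrite big_split /= [X in _ + X](_ : _ = 0) ?addr0 //.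
  rewrite exchange_big /=; apply: big1 => i _.
  under eq_bigr => k _ do rewrite scalerA.
  rewrite -scaler_suml [X in X *: _](_ : _ = (lam *m M) ord0 i).
    by rewrite lamM mxE scale0r.
  by rewrite !mxE; apply: eq_bigr => k _; rewrite mxE.
by apply: closed_fincodim_subspace_sum => // k; exact: (ycP k).1.
Qed.

End OperatorSpaces.

Section L2.
Variable R : realType.
Implicit Types (u w : nat -> R) (a : R).

Definition l2norm u : R := Num.sqrt (fine (l2sq u)).

Lemma l2sq_ge0 u : (0 <= l2sq u)%E.
Proof. by apply: nneseries_ge0 => k _ _; rewrite lee_fin sqr_ge0. Qed.

Lemma l2sq_fin_num u : (l2sq u < +oo)%E -> l2sq u \is a fin_num.
Proof. by rewrite ge0_fin_numE ?l2sq_ge0. Qed.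

Lemma l2norm_ge0 u : 0 <= l2norm u.
Proof. exact: sqrtr_ge0. Qed.

Lemma l2sq_finsupp u m : (forall k, (m <= k)%N -> u k = 0) ->
  l2sq u = (\sum_(k < m) u k ^+ 2)%:E.
Proof.
move=> u0; rewrite /l2sq (@nneseries_split _ _ 0 m) => [|k _]; last first.
  by rewrite lee_fin sqr_ge0.
rewrite eseries0 ?adde0 => [|k /= mk _]; last by rewrite u0 // expr0n.
by rewrite add0n sumEFin big_mkord.
Qed.

Lemma l2norm_finsupp u m : (forall k, (m <= k)%N -> u k = 0) ->
  l2norm u = Num.sqrt (\sum_(k < m) u k ^+ 2).
Proof. by move=> /l2sq_finsupp; rewrite /l2norm => ->. Qed.

Lemma l2sq0 : l2sq (fun=> 0 : R) = 0%E.
Proof. by rewrite (@l2sq_finsupp _ 0) // big_ord0. Qed.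

Lemma l2norm0 : l2norm (fun=> 0 : R) = 0.
Proof. by rewrite /l2norm l2sq0 sqrtr0. Qed.

Lemma l2sqZ a u : l2sq (fun k => a * u k) = ((a ^+ 2)%:E * l2sq u)%E.
Proof.
rewrite /l2sq -nneseriesZl => [|k _]; last by rewrite lee_fin sqr_ge0.
by apply: eq_eseriesr => k _; rewrite exprMn EFinM.
Qed.

Lemma l2normZ a u : (l2sq u < +oo)%E ->
  l2norm (fun k => a * u k) = `|a| * l2norm u.
Proof.
move=> /l2sq_fin_num u_fin.
by rewrite /l2norm l2sqZ -(fineK u_fin) -EFinM sqrtrM ?sqr_ge0 // sqrtr_sqr.
Qed.

Lemma l2sq_lin_le a u w :
  (l2sq (fun k => a * u k + w k)%R <=
     (2 * a ^+ 2)%R%:E * l2sq u + 2%:E * l2sq w)%E.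
Proof.
have sq_ge0 (v : nat -> R) k : (0 <= (v k ^+ 2)%:E)%E by rewrite lee_fin sqr_ge0.
rewrite /l2sq -!nneseriesZl // -nneseriesD; last 2 first.
- by move=> k _ _; rewrite mule_ge0 // lee_fin mulr_ge0 ?sqr_ge0.
- by move=> k _ _; rewrite mule_ge0 // lee_fin sqr_ge0.
apply: lee_nneseries => [k _ _|k _]; first exact: (sq_ge0 (fun k => a * u k + w k)).
rewrite -!EFinM -EFinD lee_fin -subr_ge0.
by rewrite (_ : _ - _ = (a * u k - w k) ^+ 2) ?sqr_ge0 //; ring.
Qed.

Lemma l2sq_lin_lty a u w : (l2sq u < +oo)%E -> (l2sq w < +oo)%E ->
  (l2sq (fun k => a * u k + w k)%R < +oo)%E.
Proof.
move=> /l2sq_fin_num u_fin /l2sq_fin_num w_fin.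
apply: le_lt_trans (l2sq_lin_le a u w) _.
by rewrite -(fineK u_fin) -(fineK w_fin) -!EFinM -EFinD ltry.
Qed.

Lemma l2norm_lin_le a u w : (l2sq u < +oo)%E -> (l2sq w < +oo)%E ->
  l2norm (fun k => a * u k + w k) <= 2 * `|a| * l2norm u + 2 * l2norm w.
Proof.
move=> u_lty w_lty; have u_fin := l2sq_fin_num u_lty.
have w_fin := l2sq_fin_num w_lty.
have z_fin := l2sq_fin_num (l2sq_lin_lty a u_lty w_lty).
have := l2sq_lin_le a u w.
rewrite -(fineK u_fin) -(fineK w_fin) -(fineK z_fin) -!EFinM -EFinD lee_fin.
rewrite /l2norm.
move: (fine (l2sq u)) (fine (l2sq w)) (fine (l2sq (fun k => a * u k + w k)))
  (fine_ge0 (l2sq_ge0 u)) (fine_ge0 (l2sq_ge0 w))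
  (fine_ge0 (l2sq_ge0 (fun k => a * u k + w k))) => U W Z U0 W0 Z0 ZUW.
rewrite -(sqr_sqrtr U0) -(sqr_sqrtr W0) -(sqr_sqrtr Z0) in ZUW.
rewrite -[a ^+ 2]real_normK ?num_real // in ZUW.
rewrite -ler_sqr ?nnegrE ?addr_ge0 ?mulr_ge0 ?sqrtr_ge0 //.
apply: le_trans ZUW _; rewrite -subr_ge0.
rewrite (_ : _ - _ = 2 * (`|a| * Num.sqrt U) ^+ 2 +
    8 * (`|a| * Num.sqrt U * Num.sqrt W) + 2 * Num.sqrt W ^+ 2); last by ring.
by rewrite !addr_ge0 ?mulr_ge0 ?sqr_ge0 ?sqrtr_ge0.
Qed.

End L2.

Section Xspace.
Variable R : realType.
Implicit Types (v x y : Ecar R) (a : R).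

Lemma Ecar_linE a x y n b j k : (a *: x + y) n b j k = a * x n b j k + y n b j k.
Proof. by []. Qed.

Lemma Ecar_zeroE n b j k : (0 : Ecar R) n b j k = 0.
Proof. by []. Qed.

Lemma Ecar_scaleE a x n b j k : (a *: x) n b j k = a * x n b j k.
Proof. by []. Qed.

Lemma Xterm_ge0 v n : 0 <= Xterm v n.
Proof. by rewrite addr_ge0 ?sqr_ge0. Qed.

Lemma Xterm_eq0 v n : (forall b j k, v n b j k = 0) -> Xterm v n = 0.
Proof.
move=> v0; have cnorm0 b j : cnorm v n b j = 0.
  by rewrite -(@l2norm0 R); congr l2norm; apply/funext => k; exact: v0.
rewrite /Xterm big1 => [|j _]; last exact: cnorm0.
by rewrite bigmax_eq0 ?expr0n ?addr0.
Qed.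

Lemma Xnorm_block v n0 : (forall n b j k, n != n0 -> v n b j k = 0) ->
  Xnorm v = Num.sqrt (Xterm v n0).
Proof.
move=> v0; rewrite /Xnorm (@nneseriesD1 _ _ n0) // => [|n _]; last first.
  by rewrite lee_fin Xterm_ge0.
rewrite eseries0 ?adde0 // => n _ /andP[_ nn0].
by rewrite Xterm_eq0 // => b j k; exact: v0.
Qed.

Lemma Xspace_block v n0 : (forall n b j k, n != n0 -> v n b j k = 0) ->
  (forall n b j k, (2 * n <= j)%N -> v n b j k = 0) ->
  (forall n b j, (l2sq (v n b j) < +oo)%E) -> Xspace v.
Proof.
move=> v0 vsupp vfin; split => //.
rewrite (@nneseriesD1 _ _ n0) // => [|n _]; last by rewrite lee_fin Xterm_ge0.
rewrite eseries0 ?adde0 ?ltry // => n _ /andP[_ nn0].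
by rewrite Xterm_eq0 // => b j k; exact: v0.
Qed.

Lemma Xspace0 : Xspace (0 : Ecar R).
Proof.
apply: (@Xspace_block _ 0) => // n b j.
by rewrite (_ : (0 : Ecar R) n b j = fun=> 0) // l2sq0 ltry.
Qed.

Lemma Xnorm0 : Xnorm (0 : Ecar R) = 0.
Proof. by rewrite (@Xnorm_block _ 0) // Xterm_eq0 ?sqrtr0. Qed.

Lemma Xspace_series_fin_num v : Xspace v ->
  (\sum_(0 <= n <oo) (Xterm v n)%:E)%E \is a fin_num.
Proof.
case=> _ _ v_lty; rewrite ge0_fin_numE // nneseries_ge0 // => n _ _.
by rewrite lee_fin Xterm_ge0.
Qed.

Lemma Xterm_le_Xnorm v n : Xspace v -> Num.sqrt (Xterm v n) <= Xnorm v.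
Proof.
move=> Sv; rewrite /Xnorm ler_sqrt; last first.
  by rewrite fine_ge0 // nneseries_ge0 // => m _ _; rewrite lee_fin Xterm_ge0.
rewrite -lee_fin fineK ?Xspace_series_fin_num // (@nneseriesD1 _ _ n) // => [|m _].
  by rewrite leeDl // nneseries_ge0 // => m _ _; rewrite lee_fin Xterm_ge0.
by rewrite lee_fin Xterm_ge0.
Qed.

Lemma sum_cnorm_le_Xnorm v n : Xspace v ->
  \sum_(j < 2 * n) cnorm v n false j <= Xnorm v.
Proof.
move=> Sv; apply: le_trans (Xterm_le_Xnorm n Sv).
have sum_ge0 : 0 <= \sum_(j < 2 * n) cnorm v n false j.
  by rewrite sumr_ge0 // => j _; exact: l2norm_ge0.
rewrite -(ger0_norm sum_ge0) -sqrtr_sqr ler_sqrt ?Xterm_ge0 //.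
by rewrite lerDl sqr_ge0.
Qed.

Lemma cnorm_le_Xnorm v n (j : 'I_(2 * n)) : Xspace v -> cnorm v n false j <= Xnorm v.
Proof.
move=> Sv; apply: le_trans (sum_cnorm_le_Xnorm n Sv).
by rewrite (bigD1 j) //= lerDl sumr_ge0 // => i _; exact: l2norm_ge0.
Qed.

Lemma Xterm_lin_le a x y n : Xspace x -> Xspace y ->
  Xterm (a *: x + y) n <= 8 * a ^+ 2 * Xterm x n + 8 * Xterm y n.
Proof.
case=> _ x_lty _ [_ y_lty _].
have cnorm_lin b j : cnorm (a *: x + y) n b j <=
    2 * `|a| * cnorm x n b j + 2 * cnorm y n b j by exact: l2norm_lin_le.
have sum_lin : \sum_(j < 2 * n) cnorm (a *: x + y) n false j <=
    2 * `|a| * \sum_(j < 2 * n) cnorm x n false j +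
    2 * \sum_(j < 2 * n) cnorm y n false j.
  by rewrite !mulr_sumr -big_split ler_sum // => j _; exact: cnorm_lin.
have max_lin : \big[Num.max/0]_(j < 2 * n) cnorm (a *: x + y) n true j <=
    2 * `|a| * \big[Num.max/0]_(j < 2 * n) cnorm x n true j +
    2 * \big[Num.max/0]_(j < 2 * n) cnorm y n true j.
  apply: bigmax_le => [|j _]; first by rewrite addr_ge0 ?mulr_ge0 ?bigmax_ge_id.
  by apply: le_trans (cnorm_lin true j) _; rewrite lerD ?ler_wpM2l ?mulr_ge0 //;
    exact: (le_bigmax _ (fun j : 'I_(2 * n) => cnorm _ n true j)).
have sum_ge0 : 0 <= \sum_(j < 2 * n) cnorm (a *: x + y) n false j.
  by rewrite sumr_ge0 // => j _; exact: l2norm_ge0.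
rewrite /Xterm; apply: le_trans (lerD (sqr_lin_le sum_ge0 sum_lin)
  (sqr_lin_le (bigmax_ge_id _ _ _ _) max_lin)) _.
by rewrite -subr_ge0 (_ : _ - _ = 0) // -(real_normK (num_real a)); ring.
Qed.

Lemma Xspace_lin a x y : Xspace x -> Xspace y -> Xspace (a *: x + y).
Proof.
move=> Sx Sy; have [x0 x_lty _] := Sx; have [y0 y_lty _] := Sy; split.
- by move=> n b j k jn; rewrite Ecar_linE x0 // y0 // mulr0 addr0.
- by move=> n b j; exact: l2sq_lin_lty.
have Xterm_ge0E (v : Ecar R) n : (0 <= (Xterm v n)%:E)%E by rewrite lee_fin Xterm_ge0.
apply: (@le_lt_trans _ _ (\sum_(0 <= n <oo)
    ((8 * a ^+ 2)%:E * (Xterm x n)%:E + 8%:E * (Xterm y n)%:E))%E).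
  apply: lee_nneseries => [n _ _|n _]; first exact: Xterm_ge0E.
  by rewrite -!EFinM -EFinD lee_fin Xterm_lin_le.
rewrite nneseriesD; last 2 first.
- by move=> n _ _; rewrite mule_ge0 // lee_fin mulr_ge0 ?sqr_ge0.
- by move=> n _ _; rewrite mule_ge0.
rewrite !nneseriesZl // -(fineK (Xspace_series_fin_num Sx)).
by rewrite -(fineK (Xspace_series_fin_num Sy)) -!EFinM -EFinD ltry.
Qed.

Definition coord_vec n b j (u : nat -> R) : Ecar R :=
  fun n' b' j' k => if [&& n' == n, b' == b & j' == j] then u k else 0.

Lemma coord_vec_id n b j u : coord_vec n b j u n b j = u.
Proof. by apply/funext => k; rewrite /coord_vec !eqxx. Qed.

Lemma Xspace_coord_vec n b (j : 'I_(2 * n)) u : (l2sq u < +oo)%E ->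
  Xspace (coord_vec n b j u).
Proof.
move=> u_lty.
apply: (@Xspace_block _ n) => [n' b' j' k /negbTE|n' b' j' k|n' b' j'].
- by rewrite /coord_vec => ->.
- rewrite /coord_vec; case: and3P => // -[/eqP -> _ /eqP ->].
  by rewrite leqNgt ltn_ord.
- rewrite /coord_vec; case: and3P => _; first exact: u_lty.
  by rewrite l2sq0 ltry.
Qed.

Lemma Xnorm_coord_vec n (j : 'I_(2 * n)) u : (l2sq u < +oo)%E ->
  Xnorm (coord_vec n false j u) = l2norm u.
Proof.
move=> u_lty; rewrite (@Xnorm_block _ n) => [|n' b j' k /negbTE]; last first.
  by rewrite /coord_vec => ->.
have cnorm_coord b (j' : nat) : cnorm (coord_vec n false j u) n b j' =
    if (b == false) && (j' == j) then l2norm u else 0.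
  rewrite /cnorm /coord_vec eqxx /=; case: (_ && _) => //.
  by rewrite -/(l2norm (fun=> 0)) l2norm0.
rewrite /Xterm (bigD1 j) //= big1 => [|j' j'j]; last first.
  rewrite cnorm_coord /=; case: eqP => // /val_inj j'E.
  by rewrite j'E eqxx in j'j.
rewrite bigmax_eq0 => [|j']; last by rewrite cnorm_coord.
by rewrite cnorm_coord !eqxx addr0 expr0n addr0 sqrtr_sqr ger0_norm ?l2norm_ge0.
Qed.

Lemma sum_coord_vec (I : Type) (r : seq I) (c : I -> R) n b j
    (u : I -> nat -> R) :
  \sum_(i <- r) c i *: coord_vec n b j (u i) =
  coord_vec n b j (fun k => \sum_(i <- r) c i * u i k).
Proof.
elim: r => [|i r IH]; rewrite ?big_nil ?big_cons ?IH;
  apply/funext => n'; apply/funext => b'; apply/funext => j'; apply/funext => k.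
  by rewrite /coord_vec big_nil; case: ifP.
by rewrite Ecar_linE /coord_vec big_cons; case: ifP; rewrite ?mulr0 ?addr0.
Qed.

Lemma coord_vecZ (a : R) n b j (u : nat -> R) :
  a *: coord_vec n b j u = coord_vec n b j (fun k => a * u k).
Proof.
apply/funext => n'; apply/funext => b'; apply/funext => j'; apply/funext => k.
by rewrite Ecar_scaleE /coord_vec; case: ifP; rewrite ?mulr0.
Qed.

Lemma closed_fincodim_subspace_unit_coord_vec (Y : set (Ecar R)) n
    (j : 'I_(2 * n)) :
  closed_fincodim_subspace (@Xspace R) (@Xnorm R) Y ->
  exists2 u : nat -> R,
    (l2sq u < +oo)%E /\ l2norm u = 1 & Y (coord_vec n false j u).
Proof.
move=> Yc; have [m meet] := closed_fincodim_subspace_meets_span Yc.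
pose delta (k : 'I_m.+1) (k' : nat) : R := (k' == k)%:R.
have delta_supp k k' : (m.+1 <= k')%N -> delta k k' = 0.
  by move=> mk; rewrite /delta; case: eqP => // kk; rewrite kk leqNgt ltn_ord in mk.
have [|lam lam0] := meet (fun k => coord_vec n false j (delta k)).
  by move=> k; apply: Xspace_coord_vec; rewrite (l2sq_finsupp (delta_supp k)) ltry.
rewrite sum_coord_vec; set u0 := fun k' => _ => Yu0.
have u0_supp k' : (m.+1 <= k')%N -> u0 k' = 0.
  by move=> mk; rewrite /u0 big1 // => k _; rewrite delta_supp ?mulr0.
have u0_ord (k : 'I_m.+1) : u0 k = lam ord0 k.
  rewrite /u0 (bigD1 k) //= /delta eqxx mulr1 big1 ?addr0 // => i ik.
  by case: eqP => [/val_inj ik'|]; [rewrite ik' eqxx in ik | rewrite mulr0].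
have u0_gt0 : 0 < l2norm u0.
  rewrite (l2norm_finsupp u0_supp) sqrtr_gt0 lt_def sumr_ge0 ?andbT => [|k _];
    last exact: sqr_ge0.
  apply: contraNneq lam0 => sum0; apply/eqP/rowP => k.
  rewrite mxE -u0_ord; apply/eqP; rewrite -sqrf_eq0; apply/eqP.
  by apply: (psumr_eq0P _ sum0) => // i _; exact: sqr_ge0.
set s := l2norm u0 in u0_gt0.
have u_supp k' : (m.+1 <= k')%N -> s^-1 * u0 k' = 0.
  by move=> /u0_supp ->; rewrite mulr0.
exists (fun k => s^-1 * u0 k); first split.
- by rewrite (l2sq_finsupp u_supp) ltry.
- rewrite l2normZ; last by rewrite (l2sq_finsupp u0_supp) ltry.
  by rewrite gtr0_norm ?invr_gt0 // mulVf // gt_eqF.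
have [_ Y0 Ylin _ _] := Yc.
by have := Ylin s^-1 _ 0 Yu0 Y0; rewrite addr0 coord_vecZ.
Qed.

End Xspace.

Section DiagonalOperators.
Variables (R : realType) (n0 : nat).
Local Notation weights_vec := 'rV[R]_(2 * n0).
Implicit Types (p q : weights_vec) (x : Ecar R).

Definition weight p (j : nat) : R :=
  oapp (fun i : 'I_(2 * n0) => p ord0 i) 0 (insub j).

Lemma weight_ord p (i : 'I_(2 * n0)) : weight p i = p ord0 i.
Proof. by rewrite /weight valK. Qed.

Lemma weight_out p j : (2 * n0 <= j)%N -> weight p j = 0.
Proof. by move=> jn; rewrite /weight insubF // ltnNge jn. Qed.

Definition diag_op p x : Ecar R :=
  if `[< Xspace x >] then
    fun n b j k => if (n == n0) && b then weight p j * x n0 false j k else 0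
  else 0.

Lemma diag_opE p x : Xspace x -> diag_op p x =
  fun n b j k => if (n == n0) && b then weight p j * x n0 false j k else 0.
Proof. by move=> Sx; rewrite /diag_op asboolT. Qed.

Lemma diag_op_lin (a c : R) p q x :
  a *: diag_op p x + c *: diag_op q x = diag_op (a *: p + c *: q) x.
Proof.
apply/funext => n; apply/funext => b; apply/funext => j; apply/funext => k.
rewrite /diag_op Ecar_linE !Ecar_scaleE; case: asboolP => _; last first.
  by rewrite !Ecar_zeroE !mulr0 addr0.
case: ifP => _; rewrite ?mulr0 ?addr0 //.
rewrite /weight; case: insubP => [i _ _|_] /=; last by rewrite !(mul0r, mulr0) addr0.
by rewrite !mxE; ring.
Qed.

Lemma diag_opB p q x : diag_op p x - diag_op q x = diag_op (p - q) x.
Proof. by have := diag_op_lin 1 (-1) p q x; rewrite !scale1r !scaleN1r. Qed.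

Lemma Xspace_diag_op p x : Xspace x -> Xspace (diag_op p x).
Proof.
move=> Sx; have [_ x_lty _] := Sx; rewrite diag_opE //.
apply: (@Xspace_block _ _ n0) => [n b j k /negbTE -> //|n b j k jn|n b j].
  by move: jn; case: andP => // -[/eqP -> _] /weight_out ->; rewrite mul0r.
case: (_ && _); last by rewrite -/(l2sq (fun=> 0)) l2sq0 ltry.
by rewrite l2sqZ -(fineK (l2sq_fin_num (x_lty n0 false j))) -EFinM ltry.
Qed.

Lemma Xnorm_diag_op p x : Xspace x -> Xnorm (diag_op p x) =
  \big[Num.max/0]_(i < 2 * n0) (`|p ord0 i| * cnorm x n0 false i).
Proof.
move=> Sx; have [_ x_lty _] := Sx.
rewrite (@Xnorm_block _ _ n0) => [|n b j k]; last by rewrite diag_opE // => /negbTE ->.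
have cnorm_diag b (i : 'I_(2 * n0)) :
    cnorm (diag_op p x) n0 b i = if b then `|p ord0 i| * cnorm x n0 false i else 0.
  rewrite /cnorm diag_opE // eqxx /=; case: b; last exact: l2norm0.
  by rewrite weight_ord -l2normZ.
rewrite /Xterm big1 => [|i _]; last exact: cnorm_diag.
rewrite expr0n add0r sqrtr_sqr ger0_norm ?bigmax_ge_id //.
by apply: eq_bigr => i _; exact: cnorm_diag.
Qed.

Lemma le_Xnorm_diag_op p x (i : 'I_(2 * n0)) : Xspace x ->
  `|p ord0 i| * cnorm x n0 false i <= Xnorm (diag_op p x).
Proof.
move=> Sx; rewrite Xnorm_diag_op //.
exact: (le_bigmax _ (fun i : 'I_(2 * n0) => `|p ord0 i| * cnorm x n0 false i)).
Qed.

Lemma Xnorm_diag_op_le p x (d : R) : Xspace x -> 0 <= d ->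
  (forall i, `|p ord0 i| <= d) -> Xnorm (diag_op p x) <= d * Xnorm x.
Proof.
move=> Sx d0 pd; rewrite Xnorm_diag_op //.
apply: bigmax_le => [|i _]; first by rewrite mulr_ge0 ?sqrtr_ge0.
by rewrite ler_pM ?l2norm_ge0 ?cnorm_le_Xnorm.
Qed.

Lemma bounded_op_diag_op p : bounded_op (@Xspace R) (@Xnorm R) (diag_op p).
Proof.
split.
- exact: Xspace_diag_op.
- move=> a x y Sx Sy; rewrite !diag_opE //; last exact: Xspace_lin.
  apply/funext => n; apply/funext => b; apply/funext => j; apply/funext => k.
  by rewrite !Ecar_linE; case: ifP => _; rewrite ?mulr0 ?addr0 //; ring.
- exists (\big[Num.max/0]_(i < 2 * n0) `|p ord0 i|); move=> x Sx.
  by apply: Xnorm_diag_op_le; rewrite ?bigmax_ge_id // => i; exact: le_bigmax.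
- by move=> x Sx; rewrite /diag_op asboolF.
Qed.

Lemma opdist_diag_op_le p q (d : R) : 0 <= d ->
  (forall i, `|p ord0 i - q ord0 i| <= d) ->
  opdist (@Xspace R) (@Xnorm R) (diag_op p) (diag_op q) <= d.
Proof.
move=> d0 pqd; apply: ge_sup => [|_ [x [Sx x1] <-]].
  by exists (Xnorm (diag_op p 0 - diag_op q 0)), 0;
    split; rewrite ?Xnorm0 //; exact: Xspace0.
rewrite diag_opB; apply: le_trans (@Xnorm_diag_op_le (p - q) x d Sx d0 _) _.
  by move=> i; rewrite !mxE.
by rewrite -[leRHS]mulr1 ler_wpM2l.
Qed.

Definition weights : set weights_vec :=
  [set p | (forall i, 0 <= p ord0 i <= 1) /\ \sum_i p ord0 i <= n0%:R].

Lemma weights_compact : compact weights.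
Proof.
have -> : weights =
    [set p : weights_vec | forall i, `[0, 1]%classic (p ord0 i)] `&`
    (fun p : weights_vec => \sum_i p ord0 i) @^-1` [set r | r <= n0%:R].
  by apply/seteqP; split => p [p01 psum]; split => // i;
    have := p01 i; rewrite in_itv.
apply: compact_closedI; first exact: rV_compact (fun _ => @segment_compact R 0 1).
apply: (continuous_closedP _).1; last exact: closed_le.
apply: continuous_big => [|i _]; first exact: add_continuous.
exact: coord_continuous.
Qed.

Definition diag_ops : set (Ecar R -> Ecar R) := diag_op @` weights.

Lemma diag_ops_compact : op_compact (@Xspace R) (@Xnorm R) diag_ops.
Proof.
apply: op_compact_image weights_compact bounded_op_diag_op _ => p r r0.
have r2_gt0 : 0 < r / 2 by rewrite divr_gt0.
have near_coord i :
    \forall q \near p, `|p ord0 i - (q : weights_vec) ord0 i| < r / 2.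
  exact: cvgr_dist_lt (@coord_continuous _ _ _ ord0 i p) _ r2_gt0.
apply: filterS (filter_forall _ near_coord) => q pq.
apply: le_lt_trans (opdist_diag_op_le (ltW r2_gt0) (fun i => ltW (pq i))) _.
by rewrite ltr_pdivrMr // ltr_pMr // ltr1n.
Qed.

Lemma diag_ops_convex : op_convex diag_ops.
Proof.
move=> _ _ t [p [p01 psum] <-] [q [q01 qsum] <-] /andP[t0 t1].
exists (t *: p + (1 - t) *: q); last by apply/funext => x; rewrite diag_op_lin.
have t'0 : 0 <= 1 - t by rewrite subr_ge0.
split=> [i|].
  have /andP[pi0 pi1] := p01 i; have /andP[qi0 qi1] := q01 i; rewrite !mxE.
  rewrite addr_ge0 ?mulr_ge0 //=.
  apply: le_trans (lerD (ler_wpM2l t0 pi1) (ler_wpM2l t'0 qi1)) _.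
  by rewrite -mulrDl addrC subrK mulr1.
under eq_bigr => i _ do rewrite !mxE.
rewrite big_split /= -!mulr_sumr.
apply: le_trans (lerD (ler_wpM2l t0 psum) (ler_wpM2l t'0 qsum)) _.
by rewrite -mulrDl addrC subrK mul1r.
Qed.

(* Put full weight on the fewer than n0 slots where x is larger than 1/n0. *)
Lemma diag_ops_approx x : Xspace x -> Xnorm x <= 1 ->
  exists2 B, diag_ops B & Xnorm (diag_op (const_mx 1) x - B x) <= n0%:R^-1.
Proof.
move=> Sx x1; pose c (i : 'I_(2 * n0)) := cnorm x n0 false i.
pose p : weights_vec := \row_i (if n0%:R^-1 < c i then 1 else 0).
have n0_gt0 (i : 'I_(2 * n0)) : 0 < n0%:R :> R.
  by rewrite ltr0n -(@ltn_pmul2l 2) // muln0 (leq_ltn_trans (leq0n i) (ltn_ord i)).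
have wp : weights p.
  split=> [i|]; first by rewrite mxE; case: ifP; rewrite ?lexx ?ler01.
  apply: (@le_trans _ _ (\sum_i n0%:R * c i)).
    apply: ler_sum => i _; rewrite mxE; case: ifPn => [|_]; last first.
      by rewrite mulr_ge0 ?l2norm_ge0.
    by rewrite -[_^-1]mulr1 ltr_pdivrMl ?n0_gt0 // => /ltW.
  rewrite -mulr_sumr -[leRHS]mulr1 ler_wpM2l //.
  by rewrite (le_trans _ x1) // sum_cnorm_le_Xnorm.
exists (diag_op p); first by exists p.
rewrite diag_opB Xnorm_diag_op //.
apply: bigmax_le => [|i _]; first by rewrite invr_ge0.
rewrite !mxE; case: ifPn => [_|]; first by rewrite subrr normr0 mul0r invr_ge0.
by rewrite subr0 normr1 mul1r -leNgt.
Qed.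

Lemma weights_le_half p : (0 < n0)%N -> weights p -> exists i, p ord0 i <= 1 / 2.
Proof.
move=> n0_gt0 [_ psum]; apply: contrapT => /forallNP p_gt.
have : \sum_(i < 2 * n0) (1 / 2 : R) < \sum_i p ord0 i.
  apply: ltr_sum => [|i _]; last by rewrite ltNge; apply/negP; exact: p_gt.
  have n2_gt0 : (0 < 2 * n0)%N by rewrite muln_gt0 n0_gt0.
  by apply/hasP; exists (Ordinal n2_gt0) => //; exact: mem_index_enum.
rewrite sumr_const card_ord mulrnA (_ : 1 / 2 *+ 2 = 1 :> R).
  by move=> /lt_le_trans /(_ psum); rewrite ltxx.
by rewrite mulr2n; lra.
Qed.

End DiagonalOperators.

Theorem proposition5p29 (R : realType) :
  ~ UALS (@Xspace R) (@Xnorm R).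
Proof.
move=> [C [C_gt0 uals]].
have [n0 Cn0] : exists n0 : nat, 2 * C < n0%:R.
  by exists (Num.bound (2 * C)); apply: archi_boundP; rewrite mulr_ge0 // ltW.
have n0_gt0 : (0 < n0)%N by rewrite -(ltr0n R) (lt_trans _ Cn0) // mulr_gt0.
have eps_gt0 : 0 < n0%:R^-1 :> R by rewrite invr_gt0 ltr0n.
have [Y [_ [Yc [p wp <-] YB]]] := uals _ (@diag_ops_convex R n0)
  (@diag_ops_compact R n0) _ (bounded_op_diag_op (const_mx 1)) _ eps_gt0
  (@diag_ops_approx R n0).
have [j pj] := weights_le_half n0_gt0 wp.
have [u [u_lty u1] Yu] := closed_fincodim_subspace_unit_coord_vec j Yc.
have Su := Xspace_coord_vec false j u_lty.
have := YB _ Yu; rewrite Xnorm_coord_vec // u1 lexx diag_opB => /(_ isT).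
apply/negP; rewrite -ltNge; apply: lt_le_trans (le_Xnorm_diag_op _ j Su).
rewrite /cnorm coord_vec_id -/(l2norm u) u1 mulr1 !mxE.
apply: (@lt_le_trans _ _ (1 / 2)); last by rewrite ger0_norm; lra.
by rewrite ltr_pdivrMr ?ltr0n //; lra.
Qed.
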